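(* Fix a permutation $\pi_\alpha$ of $\mathcal{I}_L$ and $k\in\mathcal{I}_{2L-1}$, and let $\mathcal{M}_k=\{m\in\mathcal{I}_L: k\in\mathcal{J}_{\pi_\alpha^{-1}(m)}\}$. Then $|\mathcal{M}_k|=|\mathcal{L}_k|$, and the square submatrix $A(\mathcal{M}_k,\mathcal{L}_k)$ is invertible over $\mathbb{F}_\gamma$.
   Context: $\mathcal{I}_j=\{1,\dots,j\}$, $\mathcal{I}_0=\emptyset$, $\overline{\mathcal{S}}=\mathcal{I}_L\setminus\mathcal{S}$. Let $\gamma$ be a prime and $\Lambda_1\subseteq\Lambda_2\subseteq\cdots\subseteq\Lambda_{2L}$ a chain of nested lattices in $\mathbb{R}^n$. Let $\pi$ be a permutation of $\mathcal{I}_{2L}$ with $\Lambda_{\pi(2l-1)}\subseteq\Lambda_{\pi(2l)}$ for $l\in\mathcal{I}_L$, and set $\Lambda_{s,l}=\Lambda_{\pi(2l-1)}$, $\Lambda_{c,l}=\Lambda_{\pi(2l)}$. For $k\in\mathcal{I}_{2L-1}$, $\mathcal{L}_k=\{l\in\mathcal{I}_L:\Lambda_{s,l}\subseteq\Lambda_k\subseteq\Lambda_{k+1}\subseteq\Lambda_{c,l}\}$. $A=(a_{ml})\in\mathbb{Z}^{L\times L}$ is an integer matrix whose reduction mod $\gamma$ is invertible over $\mathbb{F}_\gamma$; $A(\mathcal{S},\mathcal{S}')$ is the submatrix with rows indexed by $\mathcal{S}$ and columns by $\mathcal{S}'$ (in increasing order); ranks and invertibility are over $\mathbb{F}_\gamma$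 after reduction mod $\gamma$, a matrix with no rows or no columns has rank $0$, and the $0\times0$ matrix counts as invertible. For a permutation $\pi_\alpha$ of $\mathcal{I}_L$, $\Pi_\alpha(\mathcal{S})=\{\pi_\alpha(i):i\in\mathcal{S}\}$ and for $m\in\mathcal{I}_L$, $\mathcal{J}_m=\{k\in\mathcal{I}_{2L-1}:\operatorname{rank}A(\Pi_\alpha(\overline{\mathcal{I}_{m-1}}),\mathcal{L}_k)=\operatorname{rank}A(\Pi_\alpha(\overline{\mathcal{I}_m}),\mathcal{L}_k)+1\}$. *)

From HB Require Import structures.
From mathcomp Require Import all_boot all_order all_algebra all_fingroup.
From mathcomp Require Import boolp reals.
Set Implicit Arguments. Unset Strict Implicit. Unset Printing Implicit Defensive.
Import GRing.Theory Num.Theory.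
Local Open Scope ring_scope.

Definition vsubset (R : realType) (n : nat) (X Y : 'rV[R]_n -> Prop) : Prop :=
  forall x, X x -> Y x.

Definition is_lattice (R : realType) (n : nat) (X : 'rV[R]_n -> Prop) : Prop :=
  exists B : 'M[R]_n, B \in unitmx /\
    forall x, X x <-> exists z : 'rV[int]_n, x = map_mx (fun a : int => a%:~R) z *m B.

(* 0-based indexing: I_{2L} ~ {0,...,2L-1}; pair l (0-based) uses pi(2l), pi(2l+1). *)
Lemma dbl_lt (L : nat) (l : 'I_L) : (l.*2 < L.*2)%N.
Proof. by rewrite ltn_double. Qed.
Lemma dbl1_lt (L : nat) (l : 'I_L) : (l.*2.+1 < L.*2)%N.
Proof. by rewrite ltn_Sdouble. Qed.

Definition sIdx (L : nat) (pi : 'S_(L.*2)) (l : 'I_L) : nat := pi (Ordinal (dbl_lt l)).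
Definition cIdx (L : nat) (pi : 'S_(L.*2)) (l : 'I_L) : nat := pi (Ordinal (dbl1_lt l)).

(* L_k, for 0-based k in {0,...,2L-2} (paper's k+1), uses Lambda_k and Lambda_{k+1}. *)
Definition Lset (R : realType) (n L : nat) (Lam : nat -> 'rV[R]_n -> Prop)
    (pi : 'S_(L.*2)) (k : nat) : {set 'I_L} :=
  [set l : 'I_L | `[< vsubset (Lam (sIdx pi l)) (Lam k) /\
                     vsubset (Lam k) (Lam k.+1) /\
                     vsubset (Lam k.+1) (Lam (cIdx pi l)) >]].

(* A(S,S'): rows S, columns S', both in increasing order. *)
Definition submxS (F : Type) (m p : nat) (M : 'M[F]_(m, p))
    (S : {set 'I_m}) (S' : {set 'I_p}) : 'M[F]_(#|S|, #|S'|) :=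
  \matrix_(i < #|S|, j < #|S'|) M (enum_val i) (enum_val j).

Definition modmx (gamma : nat) (m p : nat) (A : 'M[int]_(m, p)) : 'M['F_gamma]_(m, p) :=
  map_mx (fun a : int => a%:~R) A.

(* J_m for 0-based m (paper's m+1): overline(I_{m}) (paper) = {i | m <= i} (0-based). *)
Definition Jset (R : realType) (n L : nat) (Lam : nat -> 'rV[R]_n -> Prop)
    (pi : 'S_(L.*2)) (gamma : nat) (A : 'M[int]_L) (pia : 'S_L) (m : 'I_L)
    : {set 'I_(L.*2).-1} :=
  [set k : 'I_(L.*2).-1 |
     \rank (submxS (modmx gamma A) (pia @: [set i : 'I_L | (m <= i)%N]) (Lset Lam pi k))
     == (\rank (submxS (modmx gamma A) (pia @: [set i : 'I_L | (m < i)%N]) (Lset Lam pi k))).+1].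

Definition Mset (R : realType) (n L : nat) (Lam : nat -> 'rV[R]_n -> Prop)
    (pi : 'S_(L.*2)) (gamma : nat) (A : 'M[int]_L) (pia : 'S_L) (k : 'I_(L.*2).-1)
    : {set 'I_L} :=
  [set m : 'I_L | k \in Jset Lam pi gamma A pia ((pia^-1)%g m)].

From HB Require Import structures.
From mathcomp Require Import all_boot all_order all_algebra all_fingroup.
From mathcomp Require Import boolp reals.
Import GRing.Theory Num.Theory.
Local Open Scope ring_scope.

(* Let B be the column submatrix A(-, L_k); as A is invertible, B
   has rank |L_k|.  The sets pi_alpha(overline I_m), m = L, ..., 1, add the rows
   of B one at a time, and M_k collects the rows whose addition raises the rank.
   A row that does not raise the rank lies in the span of the earlier rows, so the
   rows of M_k form a basis of the row space of B: hence |M_k| = rank B = |L_k|,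
   and the square matrix A(M_k, L_k) has independent rows. *)

Section RowSpan.
Set Implicit Arguments. Unset Strict Implicit.
Local Open Scope nat_scope.
Variables (F : fieldType) (m n : nat) (B : 'M[F]_(m, n)).

Definition rowspan (S : {set 'I_m}) : 'M[F]_n := (\sum_(i in S) <<row i B>>)%MS.

Lemma rowspanS (S S' : {set 'I_m}) : S \subset S' -> (rowspan S <= rowspan S')%MS.
Proof.
move=> sSS'; apply/sumsmx_subP => i Si.
by apply: (sumsmx_sup i); rewrite ?(subsetP sSS').
Qed.

Lemma rowspan0 : rowspan set0 = 0%R.
Proof. by rewrite /rowspan big_set0. Qed.

Lemma rowspanT : (rowspan setT :=: B)%MS.
Proof.
apply/eqmxP/andP; split.
  by apply/sumsmx_subP => i _; rewrite genmxE row_sub.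
by apply/row_subP => i; apply: (sumsmx_sup i); rewrite ?in_setT ?genmxE.
Qed.

Lemma rowspanU1 (x : 'I_m) (S : {set 'I_m}) :
  x \notin S -> (rowspan (x |: S) :=: rowspan S + row x B)%MS.
Proof.
move=> xS; rewrite /rowspan big_setU1 //= addsmxC.
by apply: adds_eqmx => //; apply: genmxE.
Qed.

Lemma mxrank_rowspanU1 (x : 'I_m) (S : {set 'I_m}) : x \notin S ->
  \rank (rowspan (x |: S)) <= (\rank (rowspan S)).+1.
Proof.
move=> xS; rewrite (rowspanU1 xS).
apply: leq_trans (mxrank_adds_leqif _ _) _.
by rewrite -[X in _ <= X]addn1 leq_add2l rank_leq_row.
Qed.

Lemma rowspanU1_eq (x : 'I_m) (S : {set 'I_m}) :
  \rank (rowspan (x |: S)) <= \rank (rowspan S) -> (rowspan (x |: S) :=: rowspan S)%MS.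
Proof.
have sub := rowspanS (subsetUr [set x] S).
move=> le_rk; apply/eqmx_sym/eqmxP.
by rewrite -(mxrank_leqif_eq sub) eqn_leq le_rk mxrankS.
Qed.

Lemma eqmx_rowsub_rowspan (S : {set 'I_m}) :
  (rowsub (enum_val : 'I_#|S| -> 'I_m) B :=: rowspan S)%MS.
Proof.
apply/eqmxP/andP; split.
  apply/row_subP => j; rewrite row_rowsub.
  by apply: (sumsmx_sup (enum_val j)); rewrite ?enum_valP ?genmxE.
apply/sumsmx_subP => i Si; rewrite genmxE.
by rewrite -(enum_rankK_in Si Si) -row_rowsub row_sub.
Qed.

Definition row_basis (D S : {set 'I_m}) : bool :=
  (rowspan D == rowspan S)%MS && (\rank (rowspan D) == #|D|).

Lemma row_basis0 (D : {set 'I_m}) : row_basis (D :&: set0) set0.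
Proof. by rewrite /row_basis setI0 rowspan0 submx_refl cards0 mxrank0. Qed.

Lemma row_basisU1 (D S : {set 'I_m}) (x : 'I_m) : x \notin S ->
  (x \in D) = (\rank (rowspan (x |: S)) == (\rank (rowspan S)).+1) ->
  row_basis (D :&: S) S -> row_basis (D :&: (x |: S)) (x |: S).
Proof.
move=> xS jump /andP[/eqmxP span_DS /eqP rk_DS].
case Dx: (x \in D); move: jump; rewrite Dx => /esym jump.
  have xDS : x \notin D :&: S by rewrite inE negb_and xS orbT.
  have -> : D :&: (x |: S) = x |: (D :&: S).
    by rewrite setIUr (setIidPr _) // sub1set.
  have span_xDS : (rowspan (x |: (D :&: S)) :=: rowspan (x |: S))%MS.
    apply: eqmx_trans (rowspanU1 xDS) (eqmx_trans _ (eqmx_sym (rowspanU1 xS))).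
    exact: adds_eqmx span_DS (eqmx_refl _).
  rewrite /row_basis !span_xDS submx_refl (eqP jump) (eqmx_sym span_DS) rk_DS.
  by rewrite cardsU1 xDS add1n eqxx.
have -> : D :&: (x |: S) = D :&: S.
  by apply/setP => y; rewrite !inE; case: eqP => // ->; rewrite Dx.
have le_rk : \rank (rowspan (x |: S)) <= \rank (rowspan S).
  by move: (mxrank_rowspanU1 xS) jump; rewrite leq_eqVlt ltnS => /orP[->|].
have span_xS := rowspanU1_eq le_rk.
by rewrite /row_basis !span_xS rk_DS eqxx andbT; apply/eqmxP.
Qed.

Lemma row_basis_rank_jumps (T : nat -> {set 'I_m}) (D : {set 'I_m}) (N : nat) :
  T N = set0 ->
  (forall j, j < N -> exists2 x, T j = x |: T j.+1 /\ x \notin T j.+1 &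
     (x \in D) = (\rank (rowspan (T j)) == (\rank (rowspan (T j.+1))).+1)) ->
  row_basis (D :&: T 0) (T 0).
Proof.
move=> TN Tstep.
suff basis_from j : j <= N -> row_basis (D :&: T (N - j)) (T (N - j)).
  by rewrite -(subnn N); apply: basis_from.
elim: j => [|j IHj] le_jN; first by rewrite subn0 TN row_basis0.
have lt_N : N - j.+1 < N by rewrite ltn_subrL (leq_trans _ le_jN).
have [x [eT xT] jump] := Tstep _ lt_N.
rewrite subnSK // in eT xT jump.
by rewrite eT; apply: row_basisU1; rewrite -?eT // IHj // ltnW.
Qed.

End RowSpan.

Lemma row_free_rowsub_unit (F : fieldType) (n p : nat) (f : 'I_p -> 'I_n) (M : 'M[F]_n) :
  injective f -> M \in unitmx -> row_free (rowsub f M).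
Proof.
move=> f_inj Mu; apply/row_freeP; exists (invmx M *m (rowsub f 1%:M)^T).
rewrite rowsubE mulmxA mulmxK //; apply/matrixP => i j.
rewrite !mxE (bigD1 (f i)) //= big1 => [|l /negbTE fil].
  by rewrite !mxE eqxx mul1r addr0 (inj_eq f_inj) eq_sym.
by rewrite !mxE eq_sym fil mul0r.
Qed.

Lemma mxrank_colsub_unit (F : fieldType) (n p : nat) (g : 'I_p -> 'I_n) (M : 'M[F]_n) :
  injective g -> M \in unitmx -> \rank (colsub g M) = p.
Proof.
move=> g_inj Mu; rewrite -mxrank_tr trmx_mxsub; apply/eqP.
by apply: row_free_rowsub_unit; rewrite ?unitmx_tr.
Qed.

Lemma submxS_mxsub (F : Type) (m p : nat) (M : 'M[F]_(m, p)) S S' :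
  submxS M S S' = mxsub enum_val enum_val M.
Proof. by apply/matrixP => i j; rewrite !mxE. Qed.

Section SuffixImage.
Variables (L : nat) (s : 'S_L).

Definition suffix_image (j : nat) : {set 'I_L} := s @: [set i : 'I_L | (j <= i)%N].

Lemma suffix_image0 : suffix_image 0 = setT.
Proof.
apply/setP => y; rewrite in_setT; apply/imsetP.
by exists ((s^-1)%g y); rewrite ?inE ?permKV.
Qed.

Lemma suffix_image_size : suffix_image L = set0.
Proof.
apply/setP => y; rewrite in_set0; apply/imsetP => -[i].
by rewrite inE leqNgt ltn_ord.
Qed.

Lemma suffix_imageS (i : 'I_L) :
  suffix_image i = s i |: suffix_image i.+1 /\ s i \notin suffix_image i.+1.
Proof.
have split_i : [set j : 'I_L | (i <= j)%N] = i |: [set j : 'I_L | (i < j)%N].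
  by apply/setP => j; rewrite !inE leq_eqVlt -val_eqE eq_sym.
rewrite /suffix_image split_i imsetU1 (mem_imset _ _ perm_inj) inE ltnn.
by split.
Qed.

End SuffixImage.

Theorem lemma1 (R : realType) (n L : nat) (Lam : nat -> 'rV[R]_n -> Prop)
    (pi : 'S_(L.*2)) (gamma : nat) (A : 'M[int]_L) (pia : 'S_L)
    (k : 'I_(L.*2).-1) :
  prime gamma ->
  (forall i, (i < L.*2)%N -> is_lattice (Lam i)) ->
  (forall i, (i.+1 < L.*2)%N -> vsubset (Lam i) (Lam i.+1)) ->
  (forall l : 'I_L, vsubset (Lam (sIdx pi l)) (Lam (cIdx pi l))) ->
  modmx gamma A \in unitmx ->
  #|Mset Lam pi gamma A pia k| = #|Lset Lam pi k| /\
  forall e : #|Mset Lam pi gamma A pia k| = #|Lset Lam pi k|,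
    castmx (e, erefl) (submxS (modmx gamma A) (Mset Lam pi gamma A pia k) (Lset Lam pi k))
      \in unitmx.
Proof.
move=> _ _ _ _ Mu.
set M := modmx gamma A; set C := Lset Lam pi k; set D := Mset Lam pi gamma A pia k.
set B := colsub (enum_val : 'I_#|C| -> 'I_L) M.
have rk_sub S : \rank (submxS M S C) = \rank (rowspan B S).
  by rewrite submxS_mxsub mxsubrc eqmx_rowsub_rowspan.
have : row_basis B (D :&: setT) setT.
  rewrite -(suffix_image0 pia); apply: row_basis_rank_jumps (suffix_image_size pia) _.
  move=> j lt_jL; have [eT xT] := suffix_imageS pia (Ordinal lt_jL).
  exists (pia (Ordinal lt_jL)) => //.
  by rewrite /D /Mset inE permK /Jset inE -!rk_sub.
rewrite setIT => /andP[/eqmxP span_D /eqP rk_D].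
have rk_B : \rank (rowspan B setT) = #|C|.
  by rewrite rowspanT mxrank_colsub_unit //; apply: enum_val_inj.
have card_D : #|D| = #|C| by rewrite -rk_D span_D rk_B.
split=> // e; rewrite -row_free_unit row_free_castmx.
by rewrite /row_free rk_sub rk_D.
Qed.
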